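(* Let $(\Omega,\mathcal{F})$ be a measurable space and $\theta:\Omega\to\Omega$ any $\mathcal{F}/\mathcal{F}$-measurable map. Then there exists a subadditive $\theta$-invariant capacity on $\mathcal{F}$ and there exists a superadditive $\theta$-invariant capacity on $\mathcal{F}$. In particular, there exists a $\theta$-invariant capacity on $\mathcal{F}$.
   Context: A capacity is $\mu:\mathcal{F}\to[0,1]$ with $\mu(\emptyset)=0$, $\mu(\Omega)=1$ and $\mu(A)\le\mu(B)$ for $A\subseteq B$. It is subadditive if $\mu(A\cup B)\le\mu(A)+\mu(B)$ for disjoint $A,B$, and superadditive if $\mu(A\cup B)\ge\mu(A)+\mu(B)$ for disjoint $A,B$. It is $\theta$-invariant if $\mu(\theta^{-1}A)=\mu(A)$ for all $A\in\mathcal{F}$. *)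

From HB Require Import structures.
From mathcomp Require Import all_boot all_order all_algebra.
From mathcomp Require Import all_classical all_reals all_analysis.
Set Implicit Arguments. Unset Strict Implicit. Unset Printing Implicit Defensive.
Import Order.TTheory GRing.Theory Num.Theory.
Local Open Scope classical_set_scope.
Local Open Scope ring_scope.

(* A capacity on the sigma-algebra of T: only its values on measurable sets matter. *)
Definition capacity d (T : measurableType d) (R : realType) (mu : set T -> R) :=
  [/\ mu set0 = 0, mu setT = 1,
      (forall A, measurable A -> 0 <= mu A /\ mu A <= 1) &
      (forall A B, measurable A -> measurable B -> A `<=` B -> mu A <= mu B)].

Definition cap_subadditive d (T : measurableType d) (R : realType) (mu : set T -> R) :=
  forall A B, measurable A -> measurable B -> A `&` B = set0 ->
    mu (A `|` B) <= mu A + mu B.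

Definition cap_superadditive d (T : measurableType d) (R : realType) (mu : set T -> R) :=
  forall A B, measurable A -> measurable B -> A `&` B = set0 ->
    mu A + mu B <= mu (A `|` B).

Definition cap_invariant d (T : measurableType d) (R : realType)
  (theta : T -> T) (mu : set T -> R) :=
  forall A, measurable A -> mu (theta @^-1` A) = mu A.

From mathcomp Require Import all_boot all_order all_algebra.
From mathcomp Require Import all_classical all_reals all_analysis.
Import Order.TTheory GRing.Theory Num.Theory.
Local Open Scope classical_set_scope.
Local Open Scope ring_scope.

(* [\1_P] is a capacity when the family [P] is upward closed, omits [set0]
   and contains [setT]; it is subadditive when [P] is prime ([A `|` B] in [P]
   forces [A] or [B] in [P]) and superadditive when no two members of [P] are
   disjoint.  The sets visited infinitely often by some orbit of [theta] form a
   prime family, the sets eventually containing every orbit a family without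
   disjoint members, and both families are [theta]-invariant because shifting
   an orbit by one step does not change its behaviour at infinity.  Neither
   argument uses the measurability of [theta]. *)

Section IndicatorCapacity.
Context {d : measure_display} {T : measurableType d} {R : realType}.
Variable P : set (set T).
Hypothesis P_upward : forall A B, A `<=` B -> P A -> P B.

Lemma capacity_indic : ~ P set0 -> P setT -> capacity (\1_P : set T -> R).
Proof.
move=> nP0 PT; split.
- by rewrite indicE memNset.
- by rewrite indicE mem_set.
- by move=> A _; rewrite indicE; case: (A \in P); rewrite ?lexx ?ler01.
- move=> A B _ _ AB; rewrite !indicE.
  have [/set_mem PA|] := boolP (A \in P); last by rewrite ler0n.
  by rewrite mem_set //; exact: P_upward PA.
Qed.

Lemma cap_invariant_indic (theta : T -> T) :
  (forall A, P (theta @^-1` A) <-> P A) -> cap_invariant theta (\1_P : set T -> R).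
Proof.
move=> Pinv A _; rewrite !indicE.
suff -> : (theta @^-1` A \in P) = (A \in P) by [].
by apply/idP/idP => /set_mem/(Pinv A)/mem_set.
Qed.

Lemma cap_subadditive_indic :
  (forall A B, P (A `|` B) -> P A \/ P B) -> cap_subadditive (\1_P : set T -> R).
Proof.
move=> P_splitU A B _ _ _; rewrite !indicE.
have [/set_mem/P_splitU PAB|_] := boolP (A `|` B \in P);
  last by rewrite mulr0n addr_ge0.
have [PA|nPA] := boolP (A \in P); first by rewrite lerDl.
have [PB|nPB] := boolP (B \in P); first by rewrite lerDr.
by exfalso; case: PAB => /mem_set; apply/negP.
Qed.

Lemma cap_superadditive_indic :
  (forall A B, A `&` B = set0 -> P A -> P B -> False) ->
  cap_superadditive (\1_P : set T -> R).
Proof.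
move=> P_disj A B _ _ AB0; rewrite !indicE.
have [/set_mem PA|_] := boolP (A \in P); have [/set_mem PB|_] := boolP (B \in P).
- by exfalso; exact: P_disj PA PB.
- by rewrite addr0 mem_set //; exact: P_upward PA.
- by rewrite add0r mem_set //; exact: P_upward PB.
- by rewrite addr0 ler0n.
Qed.

End IndicatorCapacity.

Lemma near_inftySE (Q : nat -> Prop) :
  (\forall n \near \oo, Q n.+1) <-> (\forall n \near \oo, Q n).
Proof.
split; first exact: near_inftyS.
by case=> N _ QN; exists N => // n /= Nn; apply: QN; exact: leqW.
Qed.

Section OrbitFamilies.
Context {T : pointedType} (theta : T -> T).

Definition recurrent_sets : set (set T) :=
  [set A | exists x, ~ \forall n \near \oo, ~ A (iter n theta x)].

Definition absorbing_sets : set (set T) :=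
  [set A | forall x, \forall n \near \oo, A (iter n theta x)].

Lemma recurrent_sets_upward A B : A `<=` B -> recurrent_sets A -> recurrent_sets B.
Proof.
move=> AB [x nAx]; exists x; apply: contra_not nAx.
by apply: filterS => n nBn /AB.
Qed.

Lemma recurrent_sets0 : ~ recurrent_sets set0.
Proof. by case=> x nx; apply: nx; apply: nearW => n []. Qed.

Lemma recurrent_setsT : recurrent_sets setT.
Proof. by exists point => /filter_ex[n /(_ I)]. Qed.

Lemma recurrent_sets_preimage A : recurrent_sets (theta @^-1` A) <-> recurrent_sets A.
Proof.
by split=> -[x nAx]; exists x; move: nAx; rewrite -(near_inftySE (fun n => ~ A _)).
Qed.

Lemma recurrent_setsU A B :
  recurrent_sets (A `|` B) -> recurrent_sets A \/ recurrent_sets B.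
Proof.
move=> [x nABx]; apply: contrapT => /not_orP[nA nB]; apply: nABx.
have nAx : \forall n \near \oo, ~ A (iter n theta x).
  by apply: contrapT => nAx; apply: nA; exists x.
have nBx : \forall n \near \oo, ~ B (iter n theta x).
  by apply: contrapT => nBx; apply: nB; exists x.
by near=> n => -[]; [exact: (near nAx) | exact: (near nBx)].
Unshelve. all: end_near.
Qed.

Lemma absorbing_sets_upward A B : A `<=` B -> absorbing_sets A -> absorbing_sets B.
Proof. by move=> AB absA x; apply: filterS (absA x) => n /AB. Qed.

Lemma absorbing_sets0 : ~ absorbing_sets set0.
Proof. by move=> /(_ point)/filter_ex[n []]. Qed.

Lemma absorbing_setsT : absorbing_sets setT.
Proof. by move=> x; apply: nearW. Qed.

Lemma absorbing_sets_preimage A : absorbing_sets (theta @^-1` A) <-> absorbing_sets A.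
Proof.
by split=> absA x; move: (absA x); rewrite -(near_inftySE (fun n => A _)).
Qed.

Lemma absorbing_sets_disjoint A B :
  A `&` B = set0 -> absorbing_sets A -> absorbing_sets B -> False.
Proof.
move=> AB0 absA absB.
have [n [An Bn]] := filter_ex (filterI (absA point) (absB point)).
by have : (A `&` B) (iter n theta point) by []; rewrite AB0.
Qed.

End OrbitFamilies.

Theorem proposition4 (R : realType) (d : measure_display) (T : measurableType d)
  (theta : T -> T) (mtheta : measurable_fun setT theta) :
  (exists mu : set T -> R, [/\ capacity mu, cap_subadditive mu & cap_invariant theta mu]) /\
  (exists mu : set T -> R, [/\ capacity mu, cap_superadditive mu & cap_invariant theta mu]) /\
  (exists mu : set T -> R, capacity mu /\ cap_invariant theta mu).
Proof.
have recurrent_cap : capacity (\1_(recurrent_sets theta) : set T -> R).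
  apply: capacity_indic;
    [exact: recurrent_sets_upward | exact: recurrent_sets0 | exact: recurrent_setsT].
have recurrent_inv : cap_invariant theta (\1_(recurrent_sets theta) : set T -> R).
  apply: cap_invariant_indic; exact: recurrent_sets_preimage.
split; [|split].
- exists (\1_(recurrent_sets theta) : set T -> R).
  split; [exact: recurrent_cap | | exact: recurrent_inv].
  apply: cap_subadditive_indic; exact: recurrent_setsU.
- exists (\1_(absorbing_sets theta) : set T -> R); split.
  + apply: capacity_indic;
      [exact: absorbing_sets_upward | exact: absorbing_sets0 | exact: absorbing_setsT].
  + apply: cap_superadditive_indic;
      [exact: absorbing_sets_upward | exact: absorbing_sets_disjoint].
  + apply: cap_invariant_indic; exact: absorbing_sets_preimage.
- exists (\1_(recurrent_sets theta) : set T -> R).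
  split; [exact: recurrent_cap | exact: recurrent_inv].
Qed.
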